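(* Let $\alpha,\beta,\gamma$ be real (e.g. $>-1$) and $\delta\neq\pm1$. For all $0\le k\le n$, the polynomial $\mathcal J_{n,k}(x,y)$ satisfies $L_1\mathcal J_{n,k}=\mu_n\,\mathcal J_{n,k}$, where $\mu_n=-\frac n2$ if $n$ is even and $\mu_n=\frac{n+\alpha+\beta+\gamma+2}{2}$ if $n$ is odd, and $$L_1=G_5R_xR_y\partial_y+G_6R_y\partial_y+G_7R_xR_y\partial_x+G_8R_x\partial_x+G_1R_xR_y+G_2R_x+G_3R_y-(G_1+G_2+G_3)\,\mathbb I,$$ with $G_1=\frac{x[1+\beta+\gamma-y(\alpha+\beta+\gamma+2)]-\delta[y(\alpha+\gamma+1)-\gamma]}{4xy}$, $G_2=-\frac{x[x(\beta+\gamma+1)-\beta y]+\delta(y+\gamma x)}{4x^2y}$, $G_3=-\delta\,\frac{x+\alpha xy-y[y(\alpha+\gamma+1)-\gamma]}{4xy^2}$, $G_5=\frac{(\delta+x)(y-1)}{2x}$, $G_6=\frac{\delta(x-y)(y-1)}{2xy}$, $G_7=\frac{(\delta+x)(y-1)}{2y}$, $G_8=\frac{(\delta+x)(x-y)}{2xy}$ (all functions of $(x,y)$).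
   Context: $R_x f(x,y)=f(-x,y)$, $R_yf(x,y)=f(x,-y)$, $\mathbb I$ is the identity; products of operators are compositions (rightmost acts first), and $G_i$ acts by multiplication; the identity is between rational functions of $(x,y)$. For real $a,b$ and $c^2\neq1$, the Big $-1$ Jacobi polynomials are $$J_{n}(x;a,b,c)=\begin{cases}{}_2F_1\!\left(\begin{smallmatrix}-\frac n2,\ \frac{n+a+b+2}{2}\\ \frac{a+1}{2}\end{smallmatrix};\frac{1-x^2}{1-c^2}\right)+\frac{n(1-x)}{(1+c)(a+1)}\,{}_2F_1\!\left(\begin{smallmatrix}1-\frac n2,\ \frac{n+a+b+2}{2}\\ \frac{a+3}{2}\end{smallmatrix};\frac{1-x^2}{1-c^2}\right), & n\text{ even},\\[2mm] {}_2F_1\!\left(\begin{smallmatrix}-\frac{n-1}2,\ \frac{n+a+b+1}{2}\\ \frac{a+1}{2}\end{smallmatrix};\frac{1-x^2}{1-c^2}\right)-\frac{(n+a+b+1)(1-x)}{(1+c)(a+1)}\,{}_2F_1\!\left(\begin{smallmatrix}-\frac{n-1}2,\ \frac{n+a+b+3}{2}\\ \frac{a+3}{2}\end{smallmatrix};\frac{1-x^2}{1-c^2}\right), & n\text{ odd}.\end{cases}$$ Let $\rho_k(y)=y^k(1-\delta^2/y^2)^{k/2}$ for $k$ even and $\rho_k(y)=y^k(1-\delta^2/y^2)^{(k-1)/2}(1+\delta/y)$ for $k$ odd, and $$\mathcal{J}_{n,k}(x,y)=J_{n-k}\big(y;\alpha,2k+\beta+\gamma+1,(-1)^k\delta\big)\,\rho_k(y)\,J_k\Big(\frac{x}{y};\gamma,\beta,\frac{\delta}{y}\Big).$$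 *)

From Stdlib Require Import Reals Lra Lia Arith Factorial.
Open Scope R_scope.

Fixpoint poch (a : R) (j : nat) : R :=
  match j with
  | O => 1
  | S j' => poch a j' * (a + INR j')
  end.

(* Terminating Gauss hypergeometric function 2F1(-m, b; c; z).
   Since (-m)_j = 0 for j > m, the series is the finite sum over j = 0..m. *)
Definition F21 (m : nat) (b c z : R) : R :=
  sum_f_R0 (fun j => poch (- INR m) j * poch b j / (poch c j * INR (fact j)) * z ^ j) m.

Definition bigJ (n : nat) (a b c x : R) : R :=
  let z := (1 - x ^ 2) / (1 - c ^ 2) in
  if Nat.even n then
    F21 (Nat.div2 n) ((INR n + a + b + 2) / 2) ((a + 1) / 2) z
    + INR n * (1 - x) / ((1 + c) * (a + 1))
      * F21 (Nat.div2 n - 1) ((INR n + a + b + 2) / 2) ((a + 3) / 2) z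
  else
    F21 (Nat.div2 n) ((INR n + a + b + 1) / 2) ((a + 1) / 2) z
    - (INR n + a + b + 1) * (1 - x) / ((1 + c) * (a + 1))
      * F21 (Nat.div2 n) ((INR n + a + b + 3) / 2) ((a + 3) / 2) z.

Definition rho (delta : R) (k : nat) (y : R) : R :=
  if Nat.even k then y ^ k * (1 - delta ^ 2 / y ^ 2) ^ (Nat.div2 k)
  else y ^ k * (1 - delta ^ 2 / y ^ 2) ^ (Nat.div2 k) * (1 + delta / y).

Definition calJ (alpha beta gamma delta : R) (n k : nat) (x y : R) : R :=
  bigJ (n - k) alpha (2 * INR k + beta + gamma + 1) ((-1) ^ k * delta) y
  * rho delta k y
  * bigJ k gamma beta (delta / y) (x / y).

Definition G1 (alpha beta gamma delta x y : R) : R :=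
  (x * (1 + beta + gamma - y * (alpha + beta + gamma + 2))
   - delta * (y * (alpha + gamma + 1) - gamma)) / (4 * x * y).
Definition G2 (alpha beta gamma delta x y : R) : R :=
  - (x * (x * (beta + gamma + 1) - beta * y) + delta * (y + gamma * x)) / (4 * x ^ 2 * y).
Definition G3 (alpha beta gamma delta x y : R) : R :=
  - delta * ((x + alpha * x * y - y * (y * (alpha + gamma + 1) - gamma)) / (4 * x * y ^ 2)).
Definition G5 (delta x y : R) : R := (delta + x) * (y - 1) / (2 * x).
Definition G6 (delta x y : R) : R := delta * (x - y) * (y - 1) / (2 * x * y).
Definition G7 (delta x y : R) : R := (delta + x) * (y - 1) / (2 * y).
Definition G8 (delta x y : R) : R := (delta + x) * (x - y) / (2 * x * y).

Definition mu (alpha beta gamma : R) (n : nat) : R :=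
  if Nat.even n then - INR n / 2 else (INR n + alpha + beta + gamma + 2) / 2.

(* (L_1 f)(x,y), given f and its partial derivatives fx = d_x f, fy = d_y f.
   R_x R_y d_y f evaluated at (x,y) is (d_y f)(-x,-y), etc. *)
Definition L1 (alpha beta gamma delta : R) (f fx fy : R -> R -> R) (x y : R) : R :=
  let g1 := G1 alpha beta gamma delta x y in
  let g2 := G2 alpha beta gamma delta x y in
  let g3 := G3 alpha beta gamma delta x y in
  G5 delta x y * fy (- x) (- y)
  + G6 delta x y * fy x (- y)
  + G7 delta x y * fx (- x) (- y)
  + G8 delta x y * fx (- x) y
  + g1 * f (- x) (- y)
  + g2 * f (- x) y
  + g3 * f x (- y)
  - (g1 + g2 + g3) * f x y.

(* Each Big -1 Jacobi polynomial splits as J_n(x) = F(z) + s (1-x)/(1+c) G(z) with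
   z = (1-x^2)/(1-c^2), where F and G are terminating Gauss series whose parameters depend on
   the parity of n.  Contiguous relations of 2F1 tie them by the first-order system
     F' = - s (mu G + z G'),      s (z (1-z) G' - (mu z - c') G - c' F) = 0,      c' = (a+1)/2.
   Both Jacobi factors of \mathcal J_{n,k} are split this way; after eliminating F' the residual
   L_1 J - mu_n J is an explicit combination of the two second relations, a rational identity
   checked in each of the four parity cases of (n-k, k). *)

From Coquelicot Require Import Coquelicot.
From Stdlib Require Import Reals Lra Lia Field Arith.
Open Scope R_scope.

Definition psum (u : nat -> R) (N : nat) (z : R) : R :=
  sum_f_R0 (fun j => u j * z ^ j) N.

Definition shift_seq (u : nat -> R) (j : nat) : R :=
  match j with O => 0 | S i => u i end.

Definition deriv_seq (u : nat -> R) (j : nat) : R := INR (S j) * u (S j).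

Lemma is_derive_value_eq (f : R -> R) (x l l' : R) :
  is_derive f x l -> l = l' -> is_derive f x l'.
Proof. intros H <-; exact H. Qed.

Section PowerSums.

Variable z : R.

Lemma psum_ext (u v : nat -> R) (N : nat) :
  (forall j, (j <= N)%nat -> u j = v j) -> psum u N z = psum v N z.
Proof.
  intros H; unfold psum; induction N as [|N IH]; simpl.
  - rewrite H by lia; reflexivity.
  - rewrite IH by (intros; apply H; lia); rewrite H by lia; reflexivity.
Qed.

Lemma psum_plus (u v : nat -> R) (N : nat) :
  psum u N z + psum v N z = psum (fun j => u j + v j) N z.
Proof. unfold psum; induction N as [|N IH]; simpl; [ring|]. rewrite <- IH; ring. Qed.

Lemma psum_scal (c : R) (u : nat -> R) (N : nat) :
  c * psum u N z = psum (fun j => c * u j) N z.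
Proof. unfold psum; induction N as [|N IH]; simpl; [ring|]. rewrite <- IH; ring. Qed.

Lemma psum_minus (u v : nat -> R) (N : nat) :
  psum u N z - psum v N z = psum (fun j => u j - v j) N z.
Proof. unfold psum; induction N as [|N IH]; simpl; [ring|]. rewrite <- IH; ring. Qed.

Lemma psum_zero (u : nat -> R) (N : nat) :
  (forall j, (j <= N)%nat -> u j = 0) -> psum u N z = 0.
Proof.
  intros H; rewrite (psum_ext u (fun _ => 0)) by exact H; clear H.
  unfold psum; induction N as [|N IH]; simpl; [ring|]; rewrite IH; ring.
Qed.

Lemma psum_S (u : nat -> R) (N : nat) : psum u (S N) z = psum u N z + u (S N) * z ^ S N.
Proof. reflexivity. Qed.

Lemma psum_extend (u : nat -> R) (N : nat) : u (S N) = 0 -> psum u N z = psum u (S N) z.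
Proof. intros H; rewrite psum_S, H; ring. Qed.

Lemma psum_trunc (u : nat -> R) (M N : nat) :
  (M <= N)%nat -> (forall j, (M < j)%nat -> u j = 0) -> psum u N z = psum u M z.
Proof.
  intros HMN Hu; induction HMN as [|N HMN IH]; [reflexivity|].
  rewrite psum_S, IH, (Hu (S N)) by lia. ring.
Qed.

Lemma psum_mul_z (u : nat -> R) (N : nat) : z * psum u N z = psum (shift_seq u) (S N) z.
Proof.
  unfold psum; induction N as [|N IH]; simpl; [ring|].
  rewrite Rmult_plus_distr_l, IH; simpl; ring.
Qed.

Lemma psum_is_derive_gen (u : nat -> R) (N : nat) :
  is_derive (psum u N) z (psum (deriv_seq u) N z - deriv_seq u N * z ^ N).
Proof.
  induction N as [|N IH].
  - apply (is_derive_ext (fun _ => u 0%nat)); [intro t; unfold psum; simpl; ring|].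
    replace (psum (deriv_seq u) 0 z - deriv_seq u 0 * z ^ 0) with 0
      by (unfold psum; simpl; ring).
    auto_derive; [exact I | ring].
  - apply (is_derive_ext (fun t => psum u N t + u (S N) * t ^ S N)); [reflexivity|].
    eapply is_derive_value_eq.
    + apply (is_derive_plus (psum u N) (fun t => u (S N) * t ^ S N)); [exact IH|].
      apply is_derive_scal, is_derive_pow, is_derive_id.
    + unfold psum, deriv_seq, plus, one; simpl; ring.
Qed.

Lemma psum_is_derive (u : nat -> R) (N : nat) :
  u (S N) = 0 -> is_derive (psum u N) z (psum (deriv_seq u) N z).
Proof.
  intros H; replace (psum (deriv_seq u) N z)
    with (psum (deriv_seq u) N z - deriv_seq u N * z ^ N)
    by (unfold deriv_seq; rewrite H; ring).
  apply psum_is_derive_gen.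
Qed.

Lemma psum_mul_z_deriv (u : nat -> R) (N : nat) :
  u (S N) = 0 -> z * psum (deriv_seq u) N z = psum (fun j => INR j * u j) N z.
Proof.
  intros H; rewrite psum_mul_z, psum_S.
  replace (shift_seq (deriv_seq u) (S N)) with 0 by (simpl; unfold deriv_seq; rewrite H; ring).
  rewrite Rmult_0_l, Rplus_0_r; apply psum_ext.
  intros [|j] _; simpl; [ring | reflexivity].
Qed.

End PowerSums.

Lemma poch_S_l (a : R) (j : nat) : poch a (S j) = a * poch (a + 1) j.
Proof.
  induction j as [|j IH]; cbn [poch] in *; [rewrite INR_0; ring|].
  rewrite IH, S_INR; ring.
Qed.

Lemma poch_neg_nat (m j : nat) : (m < j)%nat -> poch (- INR m) j = 0.
Proof.
  induction j as [|j IH]; intros H; [lia|]; cbn [poch].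
  destruct (Nat.eq_dec m j) as [->|Hne]; [ring|].
  rewrite IH by lia; ring.
Qed.

Lemma poch_pos (c : R) (j : nat) : 0 < c -> 0 < poch c j.
Proof.
  intros Hc; induction j as [|j IH]; cbn [poch]; [lra|].
  pose proof (pos_INR j); apply Rmult_lt_0_compat; lra.
Qed.

Definition hgcoef (a b c : R) (j : nat) : R :=
  poch a j * poch b j / (poch c j * INR (fact j)).

(* [F21 m b c] is convertible to [hgsum m (- INR m) b c]; the [change]s below rely on it. *)
Definition hgsum (N : nat) (a b c z : R) : R := psum (hgcoef a b c) N z.

Definition dhgsum (N : nat) (a b c z : R) : R := psum (deriv_seq (hgcoef a b c)) N z.

Lemma hgcoef_0 (a b c : R) : hgcoef a b c 0 = 1.
Proof. unfold hgcoef; cbn [poch fact]; rewrite INR_1; field. Qed.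

Lemma hgcoef_comm (a b c : R) (j : nat) : hgcoef a b c j = hgcoef b a c j.
Proof. unfold hgcoef, Rdiv; ring. Qed.

Lemma hgcoef_neg_nat (m : nat) (b c : R) (j : nat) :
  (m < j)%nat -> hgcoef (- INR m) b c j = 0.
Proof. intros H; unfold hgcoef; rewrite poch_neg_nat by exact H; unfold Rdiv; ring. Qed.

Section Coefficients.

Variables a b c : R.
Hypothesis c_pos : 0 < c.

Let poch_c1_neq0 (j : nat) : poch (c + 1) j <> 0.
Proof. apply Rgt_not_eq, poch_pos; lra. Qed.

Lemma deriv_seq_hgcoef (j : nat) :
  c * deriv_seq (hgcoef a b c) j = a * b * hgcoef (a + 1) (b + 1) (c + 1) j.
Proof.
  unfold deriv_seq, hgcoef; rewrite !poch_S_l, fact_simpl, mult_INR.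
  pose proof (INR_fact_neq_0 j); pose proof (poch_c1_neq0 j).
  pose proof (not_0_INR (S j) (Nat.neq_succ_0 j)).
  field; repeat split; auto; lra.
Qed.

Lemma hgcoef_contiguous (i : nat) :
  (INR (S i) + c) * hgcoef (a + 1) b (c + 1) (S i)
  - (INR i + b) * hgcoef (a + 1) b (c + 1) i - c * hgcoef a b c (S i) = 0.
Proof.
  unfold hgcoef; rewrite (poch_S_l a), (poch_S_l c), fact_simpl, mult_INR; cbn [poch].
  rewrite S_INR.
  pose proof (INR_fact_neq_0 i); pose proof (poch_c1_neq0 i); pose proof (pos_INR i).
  field; repeat split; auto; lra.
Qed.

End Coefficients.

Lemma hgcoef_shift_b (a b c : R) (j : nat) :
  (b + INR j) * hgcoef a b c j = b * hgcoef a (b + 1) c j.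
Proof.
  unfold hgcoef, Rdiv.
  replace ((b + INR j) * (poch a j * poch b j * / (poch c j * INR (fact j))))
    with (poch a j * poch b (S j) * / (poch c j * INR (fact j))) by (cbn [poch]; ring).
  rewrite poch_S_l; ring.
Qed.

Section TruncatedHypergeometric.

Variables (N : nat) (a b c z : R).

Lemma hgsum_is_derive :
  hgcoef a b c (S N) = 0 -> is_derive (fun t => hgsum N a b c t) z (dhgsum N a b c z).
Proof. apply psum_is_derive. Qed.

Lemma hgsum_deriv : 0 < c -> c * dhgsum N a b c z = a * b * hgsum N (a + 1) (b + 1) (c + 1) z.
Proof.
  intros Hc; unfold dhgsum, hgsum; rewrite !psum_scal; apply psum_ext; intros j _.
  apply deriv_seq_hgcoef, Hc.
Qed.

Lemma hgsum_contiguous_b : hgcoef a b c (S N) = 0 ->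
  b * hgsum N a b c z + z * dhgsum N a b c z = b * hgsum N a (b + 1) c z.
Proof.
  intros Htop; unfold dhgsum, hgsum; rewrite psum_mul_z_deriv by exact Htop.
  rewrite psum_scal, psum_plus, psum_scal; apply psum_ext; intros j _.
  rewrite <- hgcoef_shift_b; ring.
Qed.

Lemma hgsum_contiguous_ac :
  0 < c -> hgcoef a b c (S N) = 0 -> hgcoef (a + 1) b (c + 1) (S N) = 0 ->
  z * (1 - z) * dhgsum N (a + 1) b (c + 1) z - (b * z - c) * hgsum N (a + 1) b (c + 1) z
  - c * hgsum N a b c z = 0.
Proof.
  intros Hc HtopB HtopA; unfold dhgsum, hgsum.
  set (A := hgcoef (a + 1) b (c + 1)) in *; set (B := hgcoef a b c) in *.
  match goal with |- ?L = 0 => replace L with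
    (z * psum (deriv_seq A) N z - z * (z * psum (deriv_seq A) N z)
     - b * (z * psum A N z) + c * psum A N z - c * psum B N z) by ring end.
  rewrite !psum_mul_z_deriv, !psum_mul_z by exact HtopA.
  rewrite (psum_extend _ (fun j => INR j * A j)), (psum_extend _ A), (psum_extend _ B)
    by (rewrite ?HtopA, ?HtopB; ring).
  rewrite !psum_scal, !psum_minus, !psum_plus, !psum_minus.
  apply psum_zero; intros [|i] _; cbn [shift_seq].
  - unfold A, B; rewrite !hgcoef_0; simpl; ring.
  - rewrite <- (hgcoef_contiguous a b c Hc i); fold A B; ring.
Qed.

End TruncatedHypergeometric.

Lemma hgsum_comm (N : nat) (a b c z : R) : hgsum N a b c z = hgsum N b a c z.
Proof. apply psum_ext; intros j _; apply hgcoef_comm. Qed.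

Lemma dhgsum_comm (N : nat) (a b c z : R) : dhgsum N a b c z = dhgsum N b a c z.
Proof. apply psum_ext; intros j _; unfold deriv_seq; rewrite hgcoef_comm; reflexivity. Qed.

Lemma hgsum_trunc (M N : nat) (a b c z : R) :
  (M <= N)%nat -> (forall j, (M < j)%nat -> hgcoef a b c j = 0) ->
  hgsum N a b c z = hgsum M a b c z.
Proof. apply psum_trunc. Qed.

Lemma dhgsum_trunc (M N : nat) (a b c z : R) :
  (M <= N)%nat -> (forall j, (M < j)%nat -> hgcoef a b c j = 0) ->
  dhgsum N a b c z = dhgsum M a b c z.
Proof.
  intros HMN Hv; apply psum_trunc; [exact HMN|].
  intros j Hj; unfold deriv_seq; rewrite Hv by lia; ring.
Qed.

(* [m - 1] is truncated: for [m = 0] both sides are the constant term 1. *)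
Lemma hgsum_neg_nat_pred (m : nat) (b c z : R) :
  hgsum m (1 - INR m) b c z = F21 (m - 1) b c z.
Proof.
  destruct m as [|m].
  - unfold hgsum, F21, psum; simpl; rewrite hgcoef_0; unfold hgcoef; simpl; field.
  - replace (1 - INR (S m)) with (- INR m) by (rewrite S_INR; ring).
    rewrite Nat.sub_succ, Nat.sub_0_r.
    apply hgsum_trunc; [lia|]; intros; apply hgcoef_neg_nat; lia.
Qed.

Definition dF21 (m : nat) (b c z : R) : R := dhgsum m (- INR m) b c z.

Section Gauss.

Variables (m : nat) (b c z : R).

Lemma F21_is_derive : is_derive (fun t => F21 m b c t) z (dF21 m b c z).
Proof. apply hgsum_is_derive, hgcoef_neg_nat; lia. Qed.

Lemma F21_deriv : 0 < c -> c * dF21 m b c z = - INR m * b * F21 (m - 1) (b + 1) (c + 1) z.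
Proof.
  intros Hc; unfold dF21; rewrite hgsum_deriv by exact Hc.
  rewrite <- hgsum_neg_nat_pred; f_equal; f_equal; ring.
Qed.

Lemma F21_contiguous_b : b * F21 m b c z + z * dF21 m b c z = b * F21 m (b + 1) c z.
Proof. apply hgsum_contiguous_b, hgcoef_neg_nat; lia. Qed.

Lemma F21_contiguous_a :
  - INR m * F21 m b c z + z * dF21 m b c z = - INR m * F21 (m - 1) b c z.
Proof.
  change (- INR m * hgsum m (- INR m) b c z + z * dhgsum m (- INR m) b c z
          = - INR m * F21 (m - 1) b c z).
  rewrite hgsum_comm, dhgsum_comm, hgsum_contiguous_b.
  - rewrite hgsum_comm, <- hgsum_neg_nat_pred; do 2 f_equal; ring.
  - rewrite hgcoef_comm; apply hgcoef_neg_nat; lia.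
Qed.

Lemma F21_contiguous_ac : 0 < c ->
  INR m * (z * (1 - z) * dF21 (m - 1) b (c + 1) z - (b * z - c) * F21 (m - 1) b (c + 1) z
           - c * F21 m b c z) = 0.
Proof.
  intros Hc; destruct m as [|p]; [rewrite INR_0; ring|].
  rewrite Nat.sub_succ, Nat.sub_0_r.
  pose proof (hgsum_contiguous_ac (S p) (- INR (S p)) b c z Hc) as H.
  replace (- INR (S p) + 1) with (- INR p) in H by (rewrite S_INR; ring).
  change (INR (S p) * (z * (1 - z) * dhgsum p (- INR p) b (c + 1) z
    - (b * z - c) * hgsum p (- INR p) b (c + 1) z - c * hgsum (S p) (- INR (S p)) b c z) = 0).
  rewrite <- (hgsum_trunc p (S p)), <- (dhgsum_trunc p (S p)), H by
    (lia || (intros; apply hgcoef_neg_nat; lia) || (apply hgcoef_neg_nat; lia)).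
  ring.
Qed.

Lemma F21_contiguous_bc : 0 < c ->
  z * (1 - z) * dF21 m (b + 1) (c + 1) z - (- INR m * z - c) * F21 m (b + 1) (c + 1) z
  - c * F21 m b c z = 0.
Proof.
  intros Hc.
  change (z * (1 - z) * dhgsum m (- INR m) (b + 1) (c + 1) z
    - (- INR m * z - c) * hgsum m (- INR m) (b + 1) (c + 1) z - c * hgsum m (- INR m) b c z = 0).
  rewrite !(hgsum_comm m (- INR m)), dhgsum_comm.
  apply hgsum_contiguous_ac; [exact Hc | |]; rewrite hgcoef_comm; apply hgcoef_neg_nat; lia.
Qed.

End Gauss.

Lemma INR_even_div2 (n : nat) : Nat.even n = true -> INR n = 2 * INR (Nat.div2 n).
Proof.
  intros H; rewrite (Nat.div2_odd n) at 1; unfold Nat.odd; rewrite H; cbn [negb Nat.b2n].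
  rewrite plus_INR, mult_INR; simpl; ring.
Qed.

Section JacobiSplit.

Variables (n : nat) (a b : R).

Definition jac_e : R :=
  if Nat.even n then (INR n + a + b + 2) / 2 else (INR n + a + b + 1) / 2.
Definition jac_s : R :=
  if Nat.even n then INR n / (a + 1) else - (INR n + a + b + 1) / (a + 1).
Definition jac_mu : R := if Nat.even n then jac_e else - INR (Nat.div2 n).

Definition jac_F (z : R) : R := F21 (Nat.div2 n) jac_e ((a + 1) / 2) z.
Definition jac_dF (z : R) : R := dF21 (Nat.div2 n) jac_e ((a + 1) / 2) z.
Definition jac_G (z : R) : R :=
  if Nat.even n then F21 (Nat.div2 n - 1) jac_e ((a + 1) / 2 + 1) z
  else F21 (Nat.div2 n) (jac_e + 1) ((a + 1) / 2 + 1) z.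
Definition jac_dG (z : R) : R :=
  if Nat.even n then dF21 (Nat.div2 n - 1) jac_e ((a + 1) / 2 + 1) z
  else dF21 (Nat.div2 n) (jac_e + 1) ((a + 1) / 2 + 1) z.

Lemma bigJ_split (c x : R) : a + 1 <> 0 ->
  bigJ n a b c x = jac_F ((1 - x ^ 2) / (1 - c ^ 2))
    + jac_s * ((1 - x) / (1 + c)) * jac_G ((1 - x ^ 2) / (1 - c ^ 2)).
Proof.
  intros Ha; unfold bigJ, jac_F, jac_G, jac_s, jac_e.
  replace ((a + 3) / 2) with ((a + 1) / 2 + 1) by field.
  destruct (Nat.even n);
    [| replace ((INR n + a + b + 3) / 2) with ((INR n + a + b + 1) / 2 + 1) by field];
    (destruct (Req_dec (1 + c) 0) as [Hc|Hc];
     [rewrite Hc; unfold Rdiv; rewrite Rmult_0_l, Rinv_0; ring | field; auto]).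
Qed.

Hypothesis a_gt : -1 < a.

Lemma jac_first_order (z : R) : jac_dF z = - jac_s * (jac_mu * jac_G z + z * jac_dG z).
Proof.
  unfold jac_dF, jac_s, jac_mu, jac_G, jac_dG.
  apply (Rmult_eq_reg_l ((a + 1) / 2)); [|lra].
  rewrite F21_deriv by lra.
  destruct (Nat.even n) eqn:He.
  - rewrite F21_contiguous_b, (INR_even_div2 n He); field; lra.
  - rewrite F21_contiguous_a; unfold jac_e; rewrite He; field; lra.
Qed.

Lemma jac_second_order (z : R) :
  jac_s * (z * (1 - z) * jac_dG z - (jac_mu * z - (a + 1) / 2) * jac_G z
           - (a + 1) / 2 * jac_F z) = 0.
Proof.
  unfold jac_F, jac_s, jac_mu, jac_G, jac_dG.
  destruct (Nat.even n) eqn:He.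
  - rewrite (INR_even_div2 n He).
    replace (2 * INR (Nat.div2 n) / (a + 1)) with (2 / (a + 1) * INR (Nat.div2 n))
      by (field; lra).
    rewrite Rmult_assoc, F21_contiguous_ac by lra; ring.
  - rewrite F21_contiguous_bc by lra; ring.
Qed.

End JacobiSplit.

Lemma jac_split_is_derive (n : nat) (a b : R) (Z V : R -> R) (t Z' V' : R) :
  is_derive Z t Z' -> is_derive V t V' ->
  is_derive (fun u => jac_F n a b (Z u) + jac_s n a b * V u * jac_G n a b (Z u)) t
    (Z' * (jac_dF n a b (Z t) + jac_s n a b * V t * jac_dG n a b (Z t))
     + jac_s n a b * V' * jac_G n a b (Z t)).
Proof.
  intros HZ HV.
  assert (HF : forall z, is_derive (jac_F n a b) z (jac_dF n a b z))
    by (intro; apply F21_is_derive).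
  assert (HG : forall z, is_derive (jac_G n a b) z (jac_dG n a b z))
    by (intro; unfold jac_G, jac_dG; destruct (Nat.even n); apply F21_is_derive).
  eapply is_derive_value_eq.
  - apply (is_derive_plus (fun u => jac_F n a b (Z u))).
    + apply (is_derive_comp (jac_F n a b)); [apply HF | exact HZ].
    + apply (is_derive_mult (fun u => jac_s n a b * V u) (fun u => jac_G n a b (Z u))).
      * apply is_derive_scal, HV.
      * apply (is_derive_comp (jac_G n a b)); [apply HG | exact HZ].
      * intros; apply Rmult_comm.
  - unfold plus, mult, scal; simpl; unfold mult; simpl; ring.
Qed.

Definition rho_poly (d : R) (k : nat) (t : R) : R :=
  (t ^ 2 - d ^ 2) ^ Nat.div2 k * (if Nat.even k then 1 else t + d).

Definition rho_poly_deriv (d : R) (k : nat) (t : R) : R :=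
  (t ^ 2 - d ^ 2) ^ Nat.div2 k * (2 * INR (Nat.div2 k) * t / (t ^ 2 - d ^ 2))
    * (if Nat.even k then 1 else t + d)
  + (if Nat.even k then 0 else (t ^ 2 - d ^ 2) ^ Nat.div2 k).

Lemma rho_eq_poly (d : R) (k : nat) (t : R) : t <> 0 -> rho d k t = rho_poly d k t.
Proof.
  intros Ht; unfold rho, rho_poly.
  assert (Hk := Nat.div2_odd k); unfold Nat.odd in Hk; set (p := Nat.div2 k) in *.
  assert (E : t ^ 2 * (1 - d ^ 2 / t ^ 2) = t ^ 2 - d ^ 2) by (field; auto).
  destruct (Nat.even k); cbn [negb Nat.b2n] in Hk; rewrite Hk.
  - rewrite Nat.add_0_r, pow_mult, <- Rpow_mult_distr, E; ring.
  - rewrite pow_add, pow_mult.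
    replace ((t ^ 2) ^ p * t ^ 1 * (1 - d ^ 2 / t ^ 2) ^ p * (1 + d / t))
      with (((t ^ 2) ^ p * (1 - d ^ 2 / t ^ 2) ^ p) * (t * (1 + d / t))) by ring.
    rewrite <- Rpow_mult_distr, E; field; auto.
Qed.

Lemma rho_poly_is_derive (d : R) (k : nat) (t : R) :
  t ^ 2 - d ^ 2 <> 0 -> is_derive (rho_poly d k) t (rho_poly_deriv d k t).
Proof.
  intros Ht; unfold rho_poly, rho_poly_deriv.
  destruct (Nat.even k); (auto_derive; [exact I|]);
  (destruct (Nat.div2 k) as [|p]; cbn [Init.Nat.pred];
   replace (t * (t * 1) + - (d * (d * 1))) with (t ^ 2 - d ^ 2) by ring;
   rewrite <- ?tech_pow_Rmult, ?INR_0; field;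
   contradict Ht; ring_simplify in Ht; ring_simplify; exact Ht).
Qed.

Lemma rho_is_derive (d : R) (k : nat) (t : R) :
  t <> 0 -> t ^ 2 - d ^ 2 <> 0 -> is_derive (rho d k) t (rho_poly_deriv d k t).
Proof.
  intros Ht0 Htd; apply (is_derive_ext_loc (rho_poly d k)); [|apply rho_poly_is_derive, Htd].
  apply (filter_imp (fun u => u <> 0)); [intros u Hu; symmetry; apply rho_eq_poly, Hu|].
  exists (mkposreal (Rabs t) (Rabs_pos_lt t Ht0)); intros u Hu Hu0; subst u.
  unfold ball in Hu; simpl in Hu; unfold AbsRing_ball, abs, minus, plus, opp in Hu; simpl in Hu.
  rewrite Rplus_0_l, Rabs_Ropp in Hu; lra.
Qed.

Lemma sign_mul_sq (k : nat) (d : R) : ((-1) ^ k * d) ^ 2 = d ^ 2.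
Proof.
  rewrite Rpow_mult_distr, <- pow_mult, Nat.mul_comm, pow_mult.
  replace ((-1) ^ 2) with 1 by ring; rewrite pow1; ring.
Qed.

Lemma sign_mul_cases (k : nat) (d : R) : (-1) ^ k * d = d \/ (-1) ^ k * d = - d.
Proof.
  destruct (Nat.Even_or_Odd k) as [[p ->]|[p ->]].
  - left; rewrite pow_1_even; ring.
  - right; rewrite Nat.add_1_r, pow_1_odd; ring.
Qed.

Section CalJ.

Variables (al be ga d : R) (n k : nat).

Let n1 := (n - k)%nat.
Let b1 := 2 * INR k + be + ga + 1.
Let c1 := (-1) ^ k * d.

Definition Z_outer (y : R) : R := (1 - y ^ 2) / (1 - c1 ^ 2).
Definition Z_inner (x y : R) : R := (1 - (x / y) ^ 2) / (1 - (d / y) ^ 2).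

Definition J_outer (y : R) : R := bigJ n1 al b1 c1 y.
Definition J_inner (x y : R) : R := bigJ k ga be (d / y) (x / y).

Definition J_outer_deriv (y : R) : R :=
  - (2 * y) / (1 - c1 ^ 2)
    * (jac_dF n1 al b1 (Z_outer y)
       + jac_s n1 al b1 * ((1 - y) / (1 + c1)) * jac_dG n1 al b1 (Z_outer y))
  + jac_s n1 al b1 * (- (1 / (1 + c1))) * jac_G n1 al b1 (Z_outer y).
Definition J_inner_dx (x y : R) : R :=
  - (2 * x) / (y ^ 2 - d ^ 2)
    * (jac_dF k ga be (Z_inner x y)
       + jac_s k ga be * ((1 - x / y) / (1 + d / y)) * jac_dG k ga be (Z_inner x y))
  + jac_s k ga be * (- (1 / (y + d))) * jac_G k ga be (Z_inner x y).
Definition J_inner_dy (x y : R) : R :=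
  2 * y * (x ^ 2 - d ^ 2) / (y ^ 2 - d ^ 2) ^ 2
    * (jac_dF k ga be (Z_inner x y)
       + jac_s k ga be * ((1 - x / y) / (1 + d / y)) * jac_dG k ga be (Z_inner x y))
  + jac_s k ga be * ((x + d) / (y + d) ^ 2) * jac_G k ga be (Z_inner x y).

Definition calJ_dx (x y : R) : R := J_outer y * rho d k y * J_inner_dx x y.
Definition calJ_dy (x y : R) : R :=
  J_outer_deriv y * rho d k y * J_inner x y + J_outer y * rho_poly_deriv d k y * J_inner x y
  + J_outer y * rho d k y * J_inner_dy x y.

Hypotheses (al_gt : -1 < al) (ga_gt : -1 < ga) (d_neq1 : d <> 1) (d_neqm1 : d <> -1).

Lemma J_outer_split (y : R) :
  J_outer y = jac_F (n - k) al (2 * INR k + be + ga + 1) (Z_outer y)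
    + jac_s (n - k) al (2 * INR k + be + ga + 1) * ((1 - y) / (1 + (-1) ^ k * d))
      * jac_G (n - k) al (2 * INR k + be + ga + 1) (Z_outer y).
Proof. unfold J_outer; rewrite bigJ_split by lra; reflexivity. Qed.

Lemma J_inner_split (x y : R) :
  J_inner x y = jac_F k ga be (Z_inner x y)
    + jac_s k ga be * ((1 - x / y) / (1 + d / y)) * jac_G k ga be (Z_inner x y).
Proof. unfold J_inner; rewrite bigJ_split by lra; reflexivity. Qed.

Lemma J_outer_is_derive (y : R) : is_derive J_outer y (J_outer_deriv y).
Proof.
  assert (Hc1 : 1 - c1 ^ 2 <> 0).
  { unfold c1; rewrite sign_mul_sq; intro H.
    assert (H' : (d - 1) * (d + 1) = 0)
      by (replace ((d - 1) * (d + 1)) with (- (1 - d ^ 2)) by ring; rewrite H; ring).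
    apply Rmult_integral in H'; lra. }
  assert (Hc2 : 1 + c1 <> 0) by (unfold c1; destruct (sign_mul_cases k d) as [-> | ->]; lra).
  apply (is_derive_ext (fun t => jac_F n1 al b1 (Z_outer t)
    + jac_s n1 al b1 * ((1 - t) / (1 + c1)) * jac_G n1 al b1 (Z_outer t))).
  - intro t; symmetry; apply J_outer_split.
  - unfold J_outer_deriv.
    apply (jac_split_is_derive _ _ _ Z_outer (fun t => (1 - t) / (1 + c1)));
      unfold Z_outer; auto_derive; auto; field; auto.
Qed.

Lemma J_inner_is_derive_x (x y : R) :
  y <> 0 -> y ^ 2 - d ^ 2 <> 0 -> y + d <> 0 ->
  is_derive (fun t => J_inner t y) x (J_inner_dx x y).
Proof.
  intros Hy Hyd Hyd'.
  apply (is_derive_ext (fun t => jac_F k ga be (Z_inner t y)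
                + jac_s k ga be * ((1 - t / y) / (1 + d / y)) * jac_G k ga be (Z_inner t y))).
  - intro t; symmetry; apply J_inner_split.
  - unfold J_inner_dx.
    apply (jac_split_is_derive _ _ _ (fun t => Z_inner t y) (fun t => (1 - t / y) / (1 + d / y)));
      unfold Z_inner; auto_derive; auto; field; auto.
Qed.

Lemma J_inner_is_derive_y (x y : R) :
  y <> 0 -> y ^ 2 - d ^ 2 <> 0 -> y + d <> 0 ->
  is_derive (fun t => J_inner x t) y (J_inner_dy x y).
Proof.
  intros Hy Hyd Hyd'.
  assert (Hq : 1 + - (d * / y * (d * / y * 1)) <> 0).
  { intro H; apply Hyd.
    replace (y ^ 2 - d ^ 2) with (y ^ 2 * (1 + - (d * / y * (d * / y * 1)))) by (field; auto).
    rewrite H; ring. }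
  assert (Hl : 1 + d / y <> 0).
  { intro H; apply Hyd'; replace (y + d) with (y * (1 + d / y)) by (field; auto); rewrite H; ring. }
  apply (is_derive_ext (fun t => jac_F k ga be (Z_inner x t)
                + jac_s k ga be * ((1 - x / t) / (1 + d / t)) * jac_G k ga be (Z_inner x t))).
  - intro t; symmetry; apply J_inner_split.
  - unfold J_inner_dy.
    apply (jac_split_is_derive _ _ _ (Z_inner x) (fun t => (1 - x / t) / (1 + d / t)));
      unfold Z_inner; auto_derive; repeat split; auto; field; repeat split; auto.
Qed.

Lemma calJ_is_derive_x (x y : R) :
  y <> 0 -> y ^ 2 - d ^ 2 <> 0 -> y + d <> 0 ->
  is_derive (fun t => calJ al be ga d n k t y) x (calJ_dx x y).
Proof.
  intros Hy Hyd Hyd'.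
  apply (is_derive_ext (fun t => J_outer y * rho d k y * J_inner t y)); [reflexivity|].
  apply is_derive_scal, J_inner_is_derive_x; assumption.
Qed.

Lemma calJ_is_derive_y (x y : R) :
  y <> 0 -> y ^ 2 - d ^ 2 <> 0 -> y + d <> 0 ->
  is_derive (fun t => calJ al be ga d n k x t) y (calJ_dy x y).
Proof.
  intros Hy Hyd Hyd'.
  apply (is_derive_ext (fun t => J_outer t * rho d k t * J_inner x t)); [reflexivity|].
  eapply is_derive_value_eq.
  - apply (is_derive_mult (fun t => J_outer t * rho d k t)); [| apply J_inner_is_derive_y; auto |].
    + apply (is_derive_mult J_outer (rho d k));
        [apply J_outer_is_derive | apply rho_is_derive; auto | intros; apply Rmult_comm].
    + intros; apply Rmult_comm.
  - unfold calJ_dy, plus, mult; simpl; ring.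
Qed.

End CalJ.

Lemma Z_outer_opp (d : R) (k : nat) (t : R) : Z_outer d k (- t) = Z_outer d k t.
Proof. unfold Z_outer; f_equal; ring. Qed.

Lemma Z_inner_opp_x (d u t : R) : Z_inner d (- u) t = Z_inner d u t.
Proof. unfold Z_inner, Rdiv; f_equal; ring. Qed.

Lemma Z_inner_opp_y (d u t : R) : t <> 0 -> Z_inner d u (- t) = Z_inner d u t.
Proof. intros Ht; unfold Z_inner; f_equal; f_equal; field; auto. Qed.

Section MainIdentity.

Variables (al be ga d : R) (n1 k : nat) (x y : R).
Hypotheses (al_gt : -1 < al) (ga_gt : -1 < ga)
  (d_neq1 : d <> 1) (d_neqm1 : d <> -1) (x_neq0 : x <> 0) (y_neq0 : y <> 0)
  (yd_neq0 : y ^ 2 - d ^ 2 <> 0).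

Lemma L1_calJ :
  L1 al be ga d (calJ al be ga d (n1 + k) k) (calJ_dx al be ga d (n1 + k) k)
    (calJ_dy al be ga d (n1 + k) k) x y
  = mu al be ga (n1 + k) * calJ al be ga d (n1 + k) k x y.
Proof.
  assert (Hyd1 : y + d <> 0) by (intro H; apply yd_neq0; replace y with (- d) by lra; ring).
  assert (Hyd2 : - y + d <> 0) by (intro H; apply yd_neq0; replace y with d by lra; ring).
  assert (Hmy : - y <> 0) by lra.
  change (calJ al be ga d (n1 + k) k)
    with (fun u t => J_outer al be ga d (n1 + k) k t * rho d k t * J_inner be ga d k u t).
  unfold L1, calJ_dx, calJ_dy, J_outer_deriv, J_inner_dx, J_inner_dy; cbv beta.
  rewrite !J_outer_split, !J_inner_split, !Z_outer_opp, !Z_inner_opp_x, !Z_inner_opp_y,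
    !(rho_eq_poly d k), !Nat.add_sub by assumption.
  set (b1 := 2 * INR k + be + ga + 1).
  set (c1 := (-1) ^ k * d).
  rewrite !(jac_first_order n1 al b1), !(jac_first_order k ga be) by assumption.
  pose proof (jac_second_order n1 al b1 al_gt (Z_outer d k y)) as HRA.
  pose proof (jac_second_order k ga be ga_gt (Z_inner d x y)) as HRB.
  set (FA := jac_F n1 al b1 (Z_outer d k y)) in *.
  set (GA := jac_G n1 al b1 (Z_outer d k y)) in *.
  set (dGA := jac_dG n1 al b1 (Z_outer d k y)) in *.
  set (FB := jac_F k ga be (Z_inner d x y)) in *.
  set (GB := jac_G k ga be (Z_inner d x y)) in *.
  set (dGB := jac_dG k ga be (Z_inner d x y)) in *.
  set (s1 := jac_s n1 al b1) in *. set (s2 := jac_s k ga be) in *.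
  (* The residual is a combination of the two second-order relations. *)
  match goal with |- ?L = ?R =>
  match type of HRA with ?RA = 0 => match type of HRB with ?RB = 0 =>
  assert (E : L - R =
    (rho_poly d k (- y) * ((d + x) / (2 * x) * (FB + s2 * ((1 - - x / - y) / (1 + d / - y)) * GB)
        + d * (x - y) / (2 * x * y) * (FB + s2 * ((1 - x / - y) / (1 + d / - y)) * GB))
       * 2 * y * (c1 - y) / (y ^ 2 - d ^ 2)) * RA
    + ((FA + s1 * ((1 - - y) / (1 + c1)) * GA) * rho_poly d k (- y) * d * (y - 1) * (y + d)
         / (y * (y ^ 2 - d ^ 2))
       - (FA + s1 * ((1 - y) / (1 + c1)) * GA) * rho_poly d k y / y) * RB)
  end end end.
  2: { rewrite HRA, HRB, !Rmult_0_r, Rplus_0_r in E. apply Rminus_diag_uniq; exact E. }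
  clear HRA HRB. clearbody FA GA dGA FB GB dGB.
  assert (H1d2 : 1 - d ^ 2 <> 0).
  { intro H; assert (H' : (1 - d) * (1 + d) = 0) by (rewrite <- H; ring).
    apply Rmult_integral in H'; lra. }
  unfold s1, s2, b1, c1, jac_s, jac_mu, jac_e, rho_poly, rho_poly_deriv, mu, Z_outer, Z_inner,
    G1, G2, G3, G5, G6, G7, G8.
  replace ((- y) ^ 2) with (y ^ 2) by ring.
  destruct (Nat.Even_or_Odd k) as [[p ->]|[p ->]];
  destruct (Nat.Even_or_Odd n1) as [[m ->]|[m ->]].
  all: rewrite ?Nat.even_add, ?Nat.even_even, ?Nat.even_odd, ?Nat.div2_double, ?Nat.div2_odd';
    cbn [Bool.eqb Nat.even negb].
  all: rewrite ?plus_INR, ?mult_INR, ?Nat.add_1_r, ?pow_1_even, ?pow_1_odd, ?S_INR, ?INR_0.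
  all: set (V := (y ^ 2 - d ^ 2) ^ p).
  all: field.
  all: repeat split; auto; lra.
Qed.

End MainIdentity.

Theorem proposition3p1 (alpha beta gamma delta : R) (n k : nat) :
  -1 < alpha -> -1 < beta -> -1 < gamma -> delta <> 1 -> delta <> -1 ->
  (k <= n)%nat ->
  exists fx fy : R -> R -> R,
    (forall x y, y <> 0 -> y ^ 2 <> delta ^ 2 ->
       derivable_pt_lim (fun t => calJ alpha beta gamma delta n k t y) x (fx x y) /\
       derivable_pt_lim (fun t => calJ alpha beta gamma delta n k x t) y (fy x y)) /\
    (forall x y, x <> 0 -> y <> 0 -> y ^ 2 <> delta ^ 2 ->
       L1 alpha beta gamma delta (calJ alpha beta gamma delta n k) fx fy x y
       = mu alpha beta gamma n * calJ alpha beta gamma delta n k x y).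
Proof.
  intros Ha _ Hg Hd1 Hd2 Hkn.
  exists (calJ_dx alpha beta gamma delta n k), (calJ_dy alpha beta gamma delta n k); split.
  - intros x y Hy Hyd.
    assert (Hyd' : y ^ 2 - delta ^ 2 <> 0) by (intro H; apply Hyd; lra).
    assert (Hyd1 : y + delta <> 0)
      by (intro H; apply Hyd; replace y with (- delta) by lra; ring).
    split; apply is_derive_Reals;
      [apply calJ_is_derive_x | apply calJ_is_derive_y]; assumption.
  - intros x y Hx Hy Hyd.
    destruct (Nat.le_exists_sub k n Hkn) as [n1 [-> _]].
    apply L1_calJ; try assumption.
    intro H; apply Hyd; lra.
Qed.
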